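(* Let $R=\prod_{i=1}^n R_i$ be a finite product of commutative rings. Then $R$ is an avoidance ring if and only if each $R_i$ is an avoidance ring.
   Context: All rings are commutative with $1\neq 0$. An ideal $I$ of a ring $R$ has avoidance if whenever $I_1,\ldots,I_n$ are finitely many ideals of $R$ with $I\subseteq\bigcup_{k=1}^n I_k$, then $I\subseteq I_k$ for some $k$. A ring is an avoidance ring if every ideal of it has avoidance. *)

From HB Require Import structures.
From mathcomp Require Import all_boot all_algebra.
Set Implicit Arguments. Unset Strict Implicit. Unset Printing Implicit Defensive.
Import GRing.Theory.
Local Open Scope ring_scope.

(* An ideal of a commutative ring: a subset containing 0, closed under
   addition and under multiplication by arbitrary ring elements
   (closure under negation follows, taking r = -1). Ideals are arbitrary
   (Prop-valued) subsets, not necessarily decidable or proper. *)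
Definition is_ideal (R : comPzRingType) (I : R -> Prop) : Prop :=
  [/\ I 0,
      (forall x y, I x -> I y -> I (x + y)) &
      (forall r x, I x -> I (r * x))].

Definition has_avoidance (R : comPzRingType) (I : R -> Prop) : Prop :=
  forall (m : nat) (J : 'I_m -> R -> Prop),
    (forall k, is_ideal (J k)) ->
    (forall x, I x -> exists k, J k x) ->
    exists k, forall x, I x -> J k x.

Definition avoidance_ring (R : comPzRingType) : Prop :=
  forall I : R -> Prop, is_ideal I -> has_avoidance I.

Section DProd.
Variables (n : nat) (R : 'I_n -> comNzRingType).

Definition dprod : Type := {dffun forall i : 'I_n, R i}.

HB.instance Definition _ := Choice.on dprod.

Definition dprod_zero : dprod := [ffun i => 0].
Definition dprod_opp (f : dprod) : dprod := [ffun i => - f i].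
Definition dprod_add (f g : dprod) : dprod := [ffun i => f i + g i].
Definition dprod_one : dprod := [ffun i => 1].
Definition dprod_mul (f g : dprod) : dprod := [ffun i => f i * g i].

Fact dprod_addA : associative dprod_add.
Proof. by move=> f g h; apply/ffunP=> i; rewrite !ffunE addrA. Qed.
Fact dprod_addC : commutative dprod_add.
Proof. by move=> f g; apply/ffunP=> i; rewrite !ffunE addrC. Qed.
Fact dprod_add0 : left_id dprod_zero dprod_add.
Proof. by move=> f; apply/ffunP=> i; rewrite !ffunE add0r. Qed.
Fact dprod_addN : left_inverse dprod_zero dprod_opp dprod_add.
Proof. by move=> f; apply/ffunP=> i; rewrite !ffunE addNr. Qed.

HB.instance Definition _ :=
  GRing.isZmodule.Build dprod dprod_addA dprod_addC dprod_add0 dprod_addN.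

Fact dprod_mulA : associative dprod_mul.
Proof. by move=> f g h; apply/ffunP=> i; rewrite !ffunE mulrA. Qed.
Fact dprod_mulC : commutative dprod_mul.
Proof. by move=> f g; apply/ffunP=> i; rewrite !ffunE mulrC. Qed.
Fact dprod_mul1 : left_id dprod_one dprod_mul.
Proof. by move=> f; apply/ffunP=> i; rewrite !ffunE mul1r. Qed.
Fact dprod_mulDl : left_distributive dprod_mul (@GRing.add dprod).
Proof. by move=> f g h; apply/ffunP=> i; rewrite !ffunE mulrDl. Qed.

HB.instance Definition _ :=
  GRing.Zmodule_isComPzRing.Build dprod dprod_mulA dprod_mulC dprod_mul1 dprod_mulDl.

End DProd.

Lemma dprod_addE n (R : 'I_n -> comNzRingType) (f g : dprod R) i :
  (f + g) i = f i + g i.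
Proof. by rewrite /GRing.add /= ffunE. Qed.
Lemma dprod_mulE n (R : 'I_n -> comNzRingType) (f g : dprod R) i :
  (f * g) i = f i * g i.
Proof. by rewrite /GRing.mul /= ffunE. Qed.
Lemma dprod_oneE n (R : 'I_n -> comNzRingType) i : (1 : dprod R) i = 1.
Proof. by rewrite /GRing.one /= ffunE. Qed.

From HB Require Import structures.
From mathcomp Require Import all_boot all_algebra.
From Stdlib Require Import Classical ClassicalEpsilon.
Set Implicit Arguments. Unset Strict Implicit. Unset Printing Implicit Defensive.
Import GRing.Theory.
Local Open Scope ring_scope.

(* An ideal I of R = prod_i R_i is the product of its projections pi_i(I):
   any f with f_i in pi_i(I) for all i is glued from elements g_i of I via
   f = sum_i e_i g_i.  Hence I is contained in an ideal J as soon as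
   pi_i(I) is contained in pi_i(J) for every i.  If I is covered by J_1, ...,
   J_m but lies in none of them, choose for each k a coordinate i_k with
   pi_(i_k)(I) not in pi_(i_k)(J_k).  Avoidance in R_i yields g_i in I whose
   i-th coordinate lies outside every pi_i(J_k) with i_k = i; the glued
   element [i |-> g_i i] of I then lies in no J_k. *)

Section Avoidance.
Variable R : comPzRingType.

Lemma has_avoidance_witness (I : R -> Prop) m (J : 'I_m -> R -> Prop)
    (P : pred 'I_m) :
  is_ideal I -> has_avoidance I -> (forall k, is_ideal (J k)) ->
  (forall k, P k -> ~ (forall x, I x -> J k x)) ->
  exists2 x, I x & forall k, P k -> ~ J k x.
Proof.
move=> [I0 _ _] avI idJ notIJ; apply: NNPP => noWitness.
have coverP x : I x -> exists2 k, P k & J k x.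
  move=> Ix; apply: NNPP => notJx; apply: noWitness; exists x => // k Pk Jkx.
  by apply: notJx; exists k.
have [k0 Pk0 _] := coverP 0 I0.
(* Indices outside P are redirected to k0, so the full family stays inside P. *)
pose sel k := if P k then k else k0.
have Psel k : P (sel k) by rewrite /sel; case: ifP.
have [k IJk] : exists k, forall x, I x -> J (sel k) x.
  apply: (avI m (J \o sel)) => [k|x /coverP [k Pk Jkx]]; first exact: idJ.
  by exists k; rewrite /= /sel Pk.
exact: notIJ (Psel k) IJk.
Qed.

End Avoidance.

Section DProdIdeals.
Variables (n : nat) (R : 'I_n -> comNzRingType).
Implicit Types (I J : dprod R -> Prop) (f g : dprod R).

Lemma dprod_zeroE i : (0 : dprod R) i = 0.
Proof. by rewrite /GRing.zero /= ffunE. Qed.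

Lemma dprod_sumE (T : Type) (r : seq T) (P : pred T) (F : T -> dprod R) i :
  (\sum_(t <- r | P t) F t) i = \sum_(t <- r | P t) F t i.
Proof.
by apply: (big_morph (fun f : dprod R => f i)) => [f g|];
  rewrite ?dprod_addE ?dprod_zeroE.
Qed.

Definition dprod_lift i (x : R i) : dprod R :=
  [ffun j => dfwith (fun k => 0 : R k) x j].

Lemma dprod_liftE i (x : R i) : dprod_lift x i = x.
Proof. by rewrite ffunE dfwith_in. Qed.

Lemma dprod_lift1_mulE i j g :
  (dprod_lift (1 : R i) * g) j = if i == j then g j else 0.
Proof.
rewrite dprod_mulE ffunE; case: (dfwithP (fun k => 0 : R k) (1 : R i) j).
  by rewrite eqxx mul1r.
by move=> k /negPf ->; rewrite mul0r.
Qed.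

Definition dprod_glue (g : 'I_n -> dprod R) : dprod R := [ffun i => g i i].

Lemma dprod_glue_sum (g : 'I_n -> dprod R) :
  dprod_glue g = \sum_i dprod_lift (1 : R i) * g i.
Proof.
apply/ffunP=> j; rewrite ffunE dprod_sumE (bigD1 j) //= big1 => [|i /negPf ij].
  by rewrite dprod_lift1_mulE eqxx addr0.
by rewrite dprod_lift1_mulE ij.
Qed.

Lemma ideal_dprod_glue I (g : 'I_n -> dprod R) :
  is_ideal I -> (forall i, I (g i)) -> I (dprod_glue g).
Proof.
by move=> [I0 ID IM] Ig; rewrite dprod_glue_sum; apply: big_ind => // i _; exact: IM.
Qed.

Definition proj_ideal I i (y : R i) : Prop := exists2 f, I f & f i = y.
Arguments proj_ideal I i y : clear implicits.

Lemma is_ideal_proj I i : is_ideal I -> is_ideal (proj_ideal I i).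
Proof.
move=> [I0 ID IM]; split.
- by exists 0; rewrite ?dprod_zeroE.
- move=> _ _ [f If <-] [g Ig <-].
  by exists (f + g); rewrite ?dprod_addE //; exact: ID.
- move=> r _ [f If <-].
  by exists (dprod_lift r * f); rewrite ?dprod_mulE ?dprod_liftE //; exact: IM.
Qed.

Lemma is_ideal_preim i (I : R i -> Prop) : is_ideal I -> is_ideal (fun f => I (f i)).
Proof.
move=> [I0 ID IM]; split=> [|f g If Ig|r f If]; first by rewrite dprod_zeroE.
  by rewrite dprod_addE; exact: ID.
by rewrite dprod_mulE; exact: IM.
Qed.

Lemma ideal_dprod_proj J f :
  is_ideal J -> (forall i, proj_ideal J i (f i)) -> J f.
Proof.
move=> idJ projJ.
have [g Jg] : exists g : 'I_n -> dprod R, forall i, J (g i) /\ g i i = f i.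
  apply: (ClassicalEpsilon.choice (fun i g => J g /\ g i = f i)) => i.
  by have [g Jg gi] := projJ i; exists g.
have -> : f = dprod_glue g by apply/ffunP=> i; rewrite ffunE (proj2 (Jg i)).
by apply: ideal_dprod_glue => // i; case: (Jg i).
Qed.

Lemma ideal_dprod_sub I J :
  is_ideal J -> (forall i y, proj_ideal I i y -> proj_ideal J i y) ->
  forall f, I f -> J f.
Proof.
move=> idJ IJ f If; apply: ideal_dprod_proj => // i.
by apply: IJ; exists f.
Qed.

Lemma avoidance_dprod_component i :
  avoidance_ring (dprod R) -> avoidance_ring (R i).
Proof.
move=> avR I idI m J idJ coverI.
have [k IJk] := avR _ (is_ideal_preim idI) m (fun k f => J k (f i))
  (fun k => is_ideal_preim (idJ k)) (fun f => coverI (f i)).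
by exists k => x Ix; rewrite -(dprod_liftE x); apply: IJk; rewrite dprod_liftE.
Qed.

Lemma avoidance_dprod :
  (forall i, avoidance_ring (R i)) -> avoidance_ring (dprod R).
Proof.
move=> avR I idI m J idJ coverI; apply: NNPP => notIJ.
have [ik ik_bad] : exists ik : 'I_m -> 'I_n, forall k,
    ~ (forall y, proj_ideal I (ik k) y -> proj_ideal (J k) (ik k) y).
  apply: (ClassicalEpsilon.choice (fun k i =>
    ~ (forall y, proj_ideal I i y -> proj_ideal (J k) i y))) => k.
  apply: NNPP => IJk; apply: notIJ.
  exists k; apply: ideal_dprod_sub => // i y Iy; apply: NNPP => notJy.
  by apply: IJk; exists i => IJki; exact: notJy (IJki y Iy).
have [g gP] : exists g : 'I_n -> dprod R, forall i,
    I (g i) /\ forall k, ik k == i -> ~ proj_ideal (J k) i (g i i).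
  apply: (ClassicalEpsilon.choice (fun i g =>
    I g /\ forall k, ik k == i -> ~ proj_ideal (J k) i (g i))) => i.
  have notIJ_i k : ik k == i ->
      ~ (forall y, proj_ideal I i y -> proj_ideal (J k) i y).
    by move=> /eqP <-; exact: ik_bad.
  have [_ [g Ig <-] gJ] := has_avoidance_witness (is_ideal_proj i idI)
    (avR i _ (is_ideal_proj i idI)) (fun k => is_ideal_proj i (idJ k)) notIJ_i.
  by exists g.
have [k Jk] := coverI _ (ideal_dprod_glue idI (fun i => proj1 (gP i))).
by apply: (proj2 (gP (ik k)) k (eqxx _)); exists (dprod_glue g); rewrite ?ffunE.
Qed.

End DProdIdeals.

Theorem theorem3p7 (n : nat) (R : 'I_n -> comNzRingType) :
  (0 < n)%N ->
  (avoidance_ring (dprod R) <-> (forall i : 'I_n, avoidance_ring (R i))).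
Proof.
move=> _; split=> [avR i|]; first exact: avoidance_dprod_component.
exact: avoidance_dprod.
Qed.
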